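(* For all positive integers $n$, \[ g(n)\le f_3(2n,4,3)\le 2\lceil\log n\rceil^2 g(n). \]
   Context: Logarithms are base 2. The grid graph $\Gamma_{n,n}$ has vertex set $[n]\times[n]$, distinct vertices $(i,j),(i',j')$ adjacent iff $i=i'$ or $j=j'$. A rectangle is the induced subgraph on $\{(i,j),(i',j),(i,j'),(i',j')\}$ with $i<i'$, $j<j'$; in an edge coloring it is alternating if $\{(i,j),(i',j)\}$ and $\{(i,j'),(i',j')\}$ share a color and $\{(i,j),(i,j')\}$ and $\{(i',j),(i',j')\}$ share a color. $g(n)$ is the minimum $r$ for which some edge coloring of $\Gamma_{n,n}$ with $r$ colors has no alternating rectangle. $f_3(N,4,3)$ is the minimum $r$ for which there is a coloring of the triples of an $N$-element set (the edges of $K_N^{(3)}$) with $r$ colors such that every set of $4$ vertices has at least $3$ distinct colors on its $4$ triples. *)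

From mathcomp Require Import all_boot.
From Stdlib Require Import ClassicalEpsilon.

Definition pbool (P : Prop) : bool :=
  if excluded_middle_informative P then true else false.

Lemma pboolP (P : Prop) : reflect P (pbool P).
Proof. by rewrite /pbool; case: excluded_middle_informative => h; constructor. Qed.
Unset Printing Implicit Defensive.

Definition gvert (n : nat) : finType := ('I_n * 'I_n)%type.

Definition grid_adj (n : nat) (u v : gvert n) : bool :=
  (u != v) && ((u.1 == v.1) || (u.2 == v.2)).

(* An edge coloring of Gamma_{n,n} with r colors: a map on edges {u,v}
   (unordered pairs, represented as 2-element sets) with values in {0..r-1}.
   Values on non-edges are irrelevant. *)
Definition grid_coloring (n r : nat) (c : {set gvert n} -> nat) : Prop :=
  forall u v : gvert n, grid_adj n u v -> c [set u; v] < r.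

Definition alternating_rect (n : nat) (c : {set gvert n} -> nat)
    (i i' j j' : 'I_n) : Prop :=
  c [set (i, j); (i', j)] = c [set (i, j'); (i', j')] /\
  c [set (i, j); (i, j')] = c [set (i', j); (i', j')].

Definition has_alternating_rect (n : nat) (c : {set gvert n} -> nat) : Prop :=
  exists i i' j j' : 'I_n, [/\ i < i', j < j' & alternating_rect n c i i' j j'].

Definition g_ok (n r : nat) : Prop :=
  exists c : {set gvert n} -> nat, grid_coloring n r c /\ ~ has_alternating_rect n c.

Lemma g_ok_exists n : exists r, pbool (g_ok n r).
Proof.
exists #|{set gvert n}|; apply/pboolP; exists (fun e => nat_of_ord (enum_rank e)); split.
  by move=> u v _; exact: ltn_ord.
case=> i [i' [j [j' [lti ltj [E _]]]]].
have E' := enum_rank_inj (ord_inj E).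
have : (i, j) \in [set (i, j'); (i', j')] by rewrite -E' !inE eqxx.
rewrite !inE !xpair_eqE eqxx /= => /orP[/eqP ejj|/andP[/eqP eii _]].
  by move: ltj; rewrite ejj ltnn.
by move: lti; rewrite eii ltnn.
Qed.

Definition g (n : nat) : nat := ex_minn (g_ok_exists n).

Definition triple_coloring (N r : nat) (c : {set 'I_N} -> nat) : Prop :=
  forall T : {set 'I_N}, #|T| = 3 -> c T < r.

Definition ncolors (N : nat) (c : {set 'I_N} -> nat) (S : {set 'I_N}) : nat :=
  size (undup [seq c T | T <- enum [set T in powerset S | #|T| == 3]]).

Definition f3_ok (N r : nat) : Prop :=
  exists c : {set 'I_N} -> nat, triple_coloring N r c /\
    forall S : {set 'I_N}, #|S| = 4 -> 3 <= ncolors N c S.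

Lemma f3_ok_exists N : exists r, pbool (f3_ok N r).
Proof.
exists #|{set 'I_N}|; apply/pboolP; exists (fun e => nat_of_ord (enum_rank e)); split.
  by move=> T _; exact: ltn_ord.
move=> S cS; rewrite /ncolors undup_id; last first.
  rewrite map_inj_in_uniq ?enum_uniq //.
  by move=> x y _ _ /ord_inj/enum_rank_inj.
rewrite size_map -cardE.
have [x xS] : exists x, x \in S.
  by apply/set0Pn; rewrite -card_gt0 cS.
pose h := fun y : 'I_N => S :\ y.
have hinj : {in S &, injective h}.
  move=> y z yS zS /setP/(_ y); rewrite /h !inE eqxx yS /=.
  by case: eqP => // _ /negbT; rewrite andbT negbK => /eqP.
have le3 : 3 <= #|h @: S|.-1 by rewrite (card_in_imset hinj) cS.
apply: leq_trans le3 (leq_trans (leq_pred _) (subset_leq_card _)).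
apply/subsetP => _ /imsetP[y yS ->]; rewrite !inE subD1set /=.
by move: cS; rewrite (cardsD1 y S) yS add1n => -[->].
Qed.

Definition f3 (N : nat) : nat := ex_minn (f3_ok_exists N).

(* Lower bound: read the first n points of [2n] as the rows and the last n as the columns
   of the grid, and colour a grid edge by the triple of lines it meets.  An alternating
   rectangle on rows i, i' and columns j, j' would leave only two colours on the four
   triples of {i, i', j, j'}.

   Upper bound: give the points of [2n] distinct (L+1)-bit keys whose low L bits are
   below n, where 2^L >= n.  The highest bit s at which the keys of a triple T differ
   splits T into a pair and a singleton; the low s bits of the keys, read as grid
   coordinates, turn T into a grid edge whose two ends come from the pair.  Colour T by s,
   the level of its pair, the side of the pair and the grid colour of that edge: at most
   2 L^2 g(n) colours.  At its highest bit a 4-set splits as 2+2, and its four triples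
   then give the four sides of a grid rectangle, or as 3+1, and then the 3-part and two
   triples through the singleton get different levels or different pair levels. *)

From mathcomp Require Import all_boot zify.

Set Implicit Arguments.
Unset Strict Implicit.

Lemma ncolors_le4 N (c : {set 'I_N} -> nat) (S : {set 'I_N}) (s : seq nat) :
  #|S| = 4 -> {in S, forall y, c (S :\ y) \in s} -> ncolors N c S <= size s.
Proof.
move=> card_S cS; apply: uniq_leq_size (undup_uniq _) _ => x.
rewrite mem_undup => /mapP [T]; rewrite mem_enum inE powersetE => /andP [sTS /eqP card_T] ->.
have [_ [y yS yT]] : T \subset S /\ exists2 y, y \in S & y \notin T.
  by apply/properP; rewrite properEcard sTS card_T card_S.
suff -> : T = S :\ y by apply: cS.
apply/eqP; rewrite eqEcard subsetD1 sTS yT card_T.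
by move: card_S; rewrite (cardsD1 y) yS add1n => -[->].
Qed.

Lemma imsetU_D1 (aT bT rT : finType) (f : aT -> rT) (g : bT -> rT)
    (A : {set aT}) (B : {set bT}) a :
  injective f -> (forall b, f a != g b) -> (f @: A :|: g @: B) :\ f a = f @: (A :\ a) :|: g @: B.
Proof.
move=> f_inj fa_ng; apply/setP => x; rewrite !inE.
case: (boolP (x \in g @: B)) => [/imsetP [b _ ->]|_]; first by rewrite !orbT andbT eq_sym fa_ng.
rewrite !orbF; apply/andP/imsetP => [[neq_x /imsetP [a' Aa' eq_x]]|[a']].
  by exists a'; rewrite // !inE Aa' andbT -(inj_eq f_inj) -eq_x.
by rewrite !inE => /andP [neq_a' Aa'] ->; rewrite (inj_eq f_inj) mem_imset.
Qed.

Lemma set2D1l (T : finType) (x y : T) : x != y -> [set x; y] :\ x = [set y].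
Proof. by move=> neq_xy; rewrite setU1K // inE. Qed.

Lemma set2D1r (T : finType) (x y : T) : x != y -> [set x; y] :\ y = [set x].
Proof. by move=> neq_xy; rewrite setUC setU1K // inE eq_sym. Qed.

Section GridColoringOfTriples.
Variables (n r : nat) (c : {set 'I_(2 * n)} -> nat).
Hypotheses (c_col : triple_coloring (2 * n) r c)
  (c_rich : forall S : {set 'I_(2 * n)}, #|S| = 4 -> 3 <= ncolors (2 * n) c S).
Implicit Types (A B : {set 'I_n}) (a b : 'I_n).

Lemma row_subproof a : a < 2 * n. Proof. by have := ltn_ord a; lia. Qed.
Lemma col_subproof b : n + b < 2 * n. Proof. by have := ltn_ord b; lia. Qed.

Definition row a : 'I_(2 * n) := Ordinal (row_subproof a).
Definition col b : 'I_(2 * n) := Ordinal (col_subproof b).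

Lemma row_inj : injective row. Proof. by move=> a a' [/val_inj]. Qed.
Lemma col_inj : injective col. Proof. by move=> b b' [/addnI /val_inj]. Qed.

Lemma row_neq_col a b : (row a == col b) = false.
Proof. by apply/eqP => /(congr1 val) /=; have := ltn_ord a; lia. Qed.

Lemma row_notin_cols a B : row a \notin col @: B.
Proof. by apply/imsetP => -[b _ /eqP]; rewrite row_neq_col. Qed.

Lemma card_rows_cols A B : #|row @: A :|: col @: B| = #|A| + #|B|.
Proof.
rewrite cardsU (card_imset _ row_inj) (card_imset _ col_inj).
suff -> : row @: A :&: col @: B = set0 by rewrite cards0 subn0.
apply/setP => x; rewrite !inE; apply/andP => -[/imsetP [a _ ->]].
by rewrite (negbTE (row_notin_cols _ _)).
Qed.

Lemma rows_cols_D1row A B a : (row @: A :|: col @: B) :\ row a = row @: (A :\ a) :|: col @: B.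
Proof. by apply: imsetU_D1 row_inj _ => b; rewrite row_neq_col. Qed.

Lemma rows_cols_D1col A B b : (row @: A :|: col @: B) :\ col b = row @: A :|: col @: (B :\ b).
Proof.
by rewrite setUC imsetU_D1 1?setUC // => [|a]; [apply: col_inj | rewrite eq_sym row_neq_col].
Qed.

Definition lines (e : {set gvert n}) : {set 'I_(2 * n)} :=
  row @: [set u.1 | u in e] :|: col @: [set u.2 | u in e].

Definition grid_color e := c (lines e).

Lemma lines_pair u v : lines [set u; v] = row @: [set u.1; v.1] :|: col @: [set u.2; v.2].
Proof. by rewrite /lines !imsetU1 !imset_set1. Qed.

Lemma grid_color_coloring : grid_coloring n r grid_color.
Proof.
move=> [a b] [a' b']; rewrite /grid_adj /= xpair_eqE => /andP [neq adj]; apply: c_col.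
rewrite lines_pair card_rows_cols !cards2.
by move: neq adj; case: (a == a'); case: (b == b').
Qed.

Lemma grid_color_free : ~ has_alternating_rect n grid_color.
Proof.
case=> i [i' [j [j' [lt_i lt_j [E1 E2]]]]].
have neq_i : i != i' by apply: contraTneq lt_i => ->; rewrite ltnn.
have neq_j : j != j' by apply: contraTneq lt_j => ->; rewrite ltnn.
set S := row @: [set i; i'] :|: col @: [set j; j'].
have card_S : #|S| = 4 by rewrite card_rows_cols !cards2 neq_i neq_j.
apply/negP: (c_rich card_S); rewrite -ltnNge ltnS.
(* Removing one line from S leaves the lines of a side of the rectangle. *)
apply: (ncolors_le4 (s := [:: grid_color [set (i, j); (i', j)]; grid_color [set (i, j); (i, j')]]))
  card_S _ => y /setUP [] /imsetP [x]; rewrite !inE => /orP [] /eqP -> ->.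
- by rewrite rows_cols_D1row set2D1l // E2 /grid_color !lines_pair /= (setUid [set i']) eqxx orbT.
- by rewrite rows_cols_D1row set2D1r // /grid_color !lines_pair /= (setUid [set i]) eqxx orbT.
- by rewrite rows_cols_D1col set2D1l // E1 /grid_color !lines_pair /= (setUid [set j']) eqxx.
- by rewrite rows_cols_D1col set2D1r // /grid_color !lines_pair /= (setUid [set j]) eqxx.
Qed.

End GridColoringOfTriples.

Lemma g_ok_of_f3_ok n r : f3_ok (2 * n) r -> g_ok n r.
Proof.
case=> c [c_col c_rich].
by exists (grid_color c); split; [apply: grid_color_coloring | apply: grid_color_free].
Qed.

Lemma radix_inj m x1 x2 p1 p2 :
  p1 < m -> p2 < m -> x1 * m + p1 = x2 * m + p2 -> x1 = x2 /\ p1 = p2.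
Proof. move=> lt1 lt2 eq12; have eqx : x1 = x2 by nia. by subst; lia. Qed.

Lemma ncolors_ge3 N (c : {set 'I_N} -> nat) (S T1 T2 T3 : {set 'I_N}) :
  T1 \subset S -> T2 \subset S -> T3 \subset S -> #|T1| = 3 -> #|T2| = 3 -> #|T3| = 3 ->
  c T1 != c T2 -> c T1 != c T3 -> c T2 != c T3 -> 3 <= ncolors N c S.
Proof.
move=> s1 s2 s3 e1 e2 e3 n12 n13 n23; rewrite /ncolors.
have mem_col (T : {set 'I_N}) : T \subset S -> #|T| = 3 ->
    c T \in undup [seq c T | T <- enum [set T in powerset S | #|T| == 3]].
  by move=> sT eT; rewrite mem_undup; apply: map_f; rewrite mem_enum inE powersetE sT eT.
apply: (leq_trans _ (uniq_leq_size (s1 := [:: c T1; c T2; c T3]) _ _)) => //.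
  by rewrite /= !inE negb_or n12 n13 n23.
by move=> x; rewrite !inE => /or3P[] /eqP ->; apply: mem_col.
Qed.

Lemma alternating_rect_neq n (phi : {set gvert n} -> nat) (i1 i2 j1 j2 : 'I_n) :
  i1 != i2 -> j1 != j2 ->
  phi [set (i1, j1); (i2, j1)] = phi [set (i1, j2); (i2, j2)] ->
  phi [set (i1, j1); (i1, j2)] = phi [set (i2, j1); (i2, j2)] -> has_alternating_rect n phi.
Proof.
wlog lt_i : i1 i2 / i1 < i2.
  move=> hw ni nj h1 h2; case: (ltngtP i1 i2) => [lt|lt|/val_inj eq_i]; first exact: (hw i1 i2).
    by apply: (hw i2 i1) => //; [rewrite eq_sym | rewrite setUC h1 setUC].
  by rewrite eq_i eqxx in ni.
wlog lt_j : j1 j2 / j1 < j2.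
  move=> hw ni nj h1 h2; case: (ltngtP j1 j2) => [lt|lt|/val_inj eq_j]; first exact: (hw j1 j2).
    by apply: (hw j2 j1) => //; [rewrite eq_sym | rewrite setUC h2 setUC].
  by rewrite eq_j eqxx in nj.
by move=> _ _ h1 h2; exists i1, i2, j1, j2.
Qed.

Section BinarySplit.
Variables (V : finType) (key : V -> nat).
Hypothesis key_inj : injective key.
Implicit Types (P Q S T X Y U : {set V}) (u v x y : V).

Definition high s v := key v %/ 2 ^ s.
Definition bit s v := odd (high s v).

Lemma high0 v : high 0 v = key v.
Proof. by rewrite /high expn0 divn1. Qed.

Lemma highS s v : high s.+1 v = (high s v)./2.
Proof. by rewrite /high expnS mulnC divnMA divn2. Qed.

Lemma high_eq_ge s t u v : s <= t -> high s u = high s v -> high t u = high t v.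
Proof. by move=> /subnK <-; elim: (t - s) => [//|m IH] /IH; rewrite addSn !highS => ->. Qed.

Lemma high_eq_bit s u v :
  high s.+1 u = high s.+1 v -> bit s u = bit s v -> high s u = high s v.
Proof.
rewrite !highS /bit => h1 h2.
by rewrite -(odd_double_half (high s u)) -(odd_double_half (high s v)) h1 h2.
Qed.

Definition agree_above X s :=
  [forall u in X, forall v in X, high s.+1 u == high s.+1 v].

Lemma agree_aboveP X s :
  reflect {in X &, forall u v, high s.+1 u = high s.+1 v} (agree_above X s).
Proof.
apply: (iffP forall_inP) => [h u v /h/forall_inP hu /hu/eqP //|h u hu].
by apply/forall_inP => v hv; rewrite (h u v).
Qed.

Lemma agree_above_bound X s : (forall v, key v < 2 ^ s.+1) -> agree_above X s.
Proof. by move=> key_lt; apply/agree_aboveP => u v _ _; rewrite /high !divn_small. Qed.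

Lemma agree_above_max X : agree_above X (\max_v key v).
Proof.
apply: agree_above_bound => v.
apply: leq_ltn_trans (leq_bigmax v) _.
by apply: ltn_trans (ltn_expl _ (isT : 1 < 2)) _; rewrite ltn_exp2l.
Qed.

(* The highest bit position at which the keys of [X] differ (0 if they never do). *)
Definition level X := ex_minn (ex_intro (agree_above X) _ (agree_above_max X)).

Lemma level_agree X : {in X &, forall u v, high (level X).+1 u = high (level X).+1 v}.
Proof. by apply/agree_aboveP; rewrite /level; case: ex_minnP. Qed.

Lemma level_min X s : {in X &, forall u v, high s.+1 u = high s.+1 v} -> level X <= s.
Proof. by move/agree_aboveP; rewrite /level; case: ex_minnP => m _; apply. Qed.

Lemma level_le L X : (forall v, key v < 2 ^ L.+1) -> level X <= L.
Proof. by move/(agree_above_bound X)/agree_aboveP/level_min. Qed.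

Lemma level_set1 x : level [set x] = 0.
Proof. by apply/eqP; rewrite -leqn0; apply: level_min => u v /set1P-> /set1P->. Qed.

Lemma level_subset U X : U \subset X -> level U <= level X.
Proof. by move=> /subsetP sUX; apply: level_min => u v /sUX hu /sUX; apply: level_agree. Qed.

Lemma level_ge X s u v : u \in X -> v \in X -> high s u != high s v -> s <= level X.
Proof.
move=> hu hv; apply: contraR; rewrite -ltnNge => lt_s.
by apply/eqP/(high_eq_ge lt_s)/level_agree.
Qed.

Lemma level_lt_same_bit Y X x y : Y \subset X -> x \in Y -> y \in Y -> x != y ->
  {in Y &, forall u v, bit (level X) u = bit (level X) v} -> level Y < level X.
Proof.
move=> /subsetP sYX hx hy neq_xy same.
have eq_high : {in Y &, forall u v, high (level X) u = high (level X) v}.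
  by move=> u v hu hv; apply: high_eq_bit; [apply: level_agree; apply: sYX|apply: same].
case E: (level X) eq_high => [|s] eq_high.
  by move: neq_xy; rewrite -(inj_eq key_inj) -!high0 (eq_high x y) ?eqxx.
by rewrite ltnS; apply: level_min.
Qed.

Definition part X b := [set v in X | bit (level X) v == b].

Lemma part_subset X b : part X b \subset X.
Proof. by apply/subsetP => v; rewrite inE => /andP[]. Qed.

Lemma bit_part X b v : v \in part X b -> bit (level X) v = b.
Proof. by rewrite inE => /andP[_ /eqP]. Qed.

Lemma union_part_subset S b c P Q : P \subset part S b -> Q \subset part S c -> P :|: Q \subset S.
Proof. by move=> sP sQ; rewrite subUset (subset_trans sP) ?(subset_trans sQ) ?part_subset. Qed.

Lemma card_part X b : #|part X b| + #|part X (~~ b)| = #|X|.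
Proof.
rewrite -(cardsID [set v | bit (level X) v == b] X); congr (_ + _); apply: eq_card => v.
  by rewrite !inE andbC.
by rewrite !inE andbC; case: (bit _ v); case: b.
Qed.

Lemma card_part_gt0 X b : 1 < #|X| -> 0 < #|part X b|.
Proof.
case/card_gt1P => x [y [hx hy neq_xy]]; rewrite card_gt0; apply/negP => /eqP part_b0.
have bitX : {in X, forall v, bit (level X) v = ~~ b}.
  move=> v hv; have : v \notin part X b by rewrite part_b0 inE.
  by rewrite inE hv; case: (bit _ v); case: (b).
have /negP := ltnn (level X); apply.
by apply: (level_lt_same_bit (subxx X) hx hy neq_xy) => u w hu hw; rewrite !bitX.
Qed.
Lemma level_straddle U X u v : U \subset X -> u \in U -> v \in U ->
  bit (level X) u != bit (level X) v -> level U = level X.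
Proof.
move=> sUX hu hv neq_bit; apply/eqP; rewrite eqn_leq level_subset //.
by apply: (level_ge hu hv); apply: contraNneq neq_bit; rewrite /bit => ->.
Qed.

Lemma part_straddle X b P Q u v : P \subset part X b -> Q \subset part X (~~ b) ->
  u \in P -> v \in Q ->
  [/\ level (P :|: Q) = level X, part (P :|: Q) b = P, part (P :|: Q) (~~ b) = Q
    & #|P :|: Q| = #|P| + #|Q|].
Proof.
move=> sPX sQX hu hv; have sPQ := union_part_subset sPX sQX.
have bitP w : w \in P -> bit (level X) w = b by move/(subsetP sPX)/bit_part.
have bitQ w : w \in Q -> bit (level X) w = ~~ b by move/(subsetP sQX)/bit_part.
have lvl : level (P :|: Q) = level X.
  apply: (level_straddle sPQ (_ : u \in _) (_ : v \in _)); rewrite ?inE ?hu ?hv ?orbT //.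
  by rewrite bitP // bitQ //; case: (b).
have [part_b part_nb] : part (P :|: Q) b = P /\ part (P :|: Q) (~~ b) = Q.
  split; apply/setP => w; rewrite !inE lvl; have := bitP w; have := bitQ w;
    case: (w \in P); case: (w \in Q) => //= bQ bP;
    by [rewrite (bP isT) ?eqxx; case: (b) | rewrite (bQ isT) ?eqxx; case: (b)].
by split=> //; rewrite -(card_part _ b) part_b part_nb.
Qed.

Lemma key_mod_inj X b u v : u \in part X b -> v \in part X b ->
  key u %% 2 ^ level X = key v %% 2 ^ level X -> u = v.
Proof.
move=> hu hv eq_low; apply: key_inj.
have eq_high : high (level X) u = high (level X) v.
  apply: high_eq_bit; last by rewrite (bit_part hu) (bit_part hv).
  by apply: level_agree; apply: (subsetP (part_subset X b)).
rewrite (divn_eq (key u) (2 ^ level X)) (divn_eq (key v) (2 ^ level X)) eq_low.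
by rewrite -!/(high _ _) eq_high.
Qed.

Lemma triple_parts T : #|T| = 3 ->
  exists b x y z, [/\ x != y, part T b = [set x; y] & part T (~~ b) = [set z]].
Proof.
move=> card_T; have two : 1 < #|T| by rewrite card_T.
have := card_part T false; rewrite card_T /=.
have := card_part_gt0 false two; have := card_part_gt0 true two => gt0_t gt0_f card_sum.
have [[/eqP c2 /eqP c1]|[/eqP c1 /eqP c2]] :
    (#|part T false| = 2 /\ #|part T true| = 1) \/ (#|part T false| = 1 /\ #|part T true| = 2).
  by lia.
- case/cards2P: c2 => x [y [neq_xy e2]]; case/cards1P: c1 => z e1.
  by exists false, x, y, z.
- case/cards2P: c2 => x [y [neq_xy e2]]; case/cards1P: c1 => z e1.
  by exists true, x, y, z.
Qed.

Lemma triple_pair_levels Y : #|Y| = 3 -> exists p q r,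
  [/\ [set p; q] \subset Y, [set p; r] \subset Y, p != q, p != r &
      level [set p; q] < level [set p; r]].
Proof.
case/triple_parts => b [x [y [z [neq_xy part_b part_nb]]]].
have hx : x \in part Y b by rewrite part_b !inE eqxx.
have hy : y \in part Y b by rewrite part_b !inE eqxx orbT.
have hz : z \in part Y (~~ b) by rewrite part_nb inE.
have inY w c : w \in part Y c -> w \in Y by apply/subsetP/part_subset.
have sxy : [set x; y] \subset Y by rewrite -part_b part_subset.
have sxz : [set x; z] \subset Y by apply/subsetP => w /set2P[]->; apply: inY; [apply: hx|apply: hz].
have neq_bit : bit (level Y) x != bit (level Y) z by rewrite (bit_part hx) (bit_part hz); case: (b).
exists x, y, z; split=> //.
- by apply: contraNneq neq_bit => <-.
- rewrite (level_straddle sxz (set21 x z) (set22 x z) neq_bit).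
  apply: (level_lt_same_bit sxy (set21 x y) (set22 x y) neq_xy) => u w.
  by rewrite -part_b => /bit_part -> /bit_part ->.
Qed.

Lemma quad_parts S : #|S| = 4 ->
  (#|part S false| = 2 /\ #|part S true| = 2) \/
  exists b, #|part S b| = 3 /\ #|part S (~~ b)| = 1.
Proof.
move=> card_S; have two : 1 < #|S| by rewrite card_S.
have := card_part S false; rewrite card_S /=.
have := card_part_gt0 false two; have := card_part_gt0 true two => gt0_t gt0_f card_sum.
have [h22|[[c3 c1]|[c1 c3]]] :
    (#|part S false| = 2 /\ #|part S true| = 2) \/
    (#|part S false| = 3 /\ #|part S true| = 1) \/
    (#|part S false| = 1 /\ #|part S true| = 3).
  by lia.
- by left.
- by right; exists false.
- by right; exists true.
Qed.

End BinarySplit.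

Section TripleColoringOfGrid.
Variables (N n L r : nat) (key : 'I_N -> nat) (phi : {set gvert n} -> nat).
Hypotheses (n_gt0 : 0 < n) (key_inj : injective key) (key_lt : forall v, key v < 2 ^ L.+1)
  (key_mod_lt : forall v, key v %% 2 ^ L < n)
  (phi_col : grid_coloring n r phi) (phi_free : ~ has_alternating_rect n phi).
Implicit Types (P Q S T : {set 'I_N}) (u v : 'I_N).

Local Notation level := (level key).
Local Notation part := (part key).

(* The reduction modulo [n] is a no-op for [s <= L]; it only makes [cell] total. *)
Definition cell s v : 'I_n := Ordinal (ltn_pmod (key v %% 2 ^ s) n_gt0).

Lemma cell_eq T b u v : u \in part T b -> v \in part T b ->
  (cell (level T) u == cell (level T) v) = (u == v).
Proof.
move=> hu hv; apply/eqP/eqP => [|-> //].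
have low_lt w : key w %% 2 ^ level T < n.
  apply: leq_ltn_trans (key_mod_lt w).
  by rewrite -(modn_dvdm _ (dvdn_exp2l 2 (level_le T key_lt))) leq_mod.
move/(congr1 val) => /=; rewrite !(modn_small (low_lt _)).
exact: (key_mod_inj key_inj hu hv).
Qed.

Definition edge T : {set gvert n} :=
  [set (cell (level T) u, cell (level T) w) | u in part T false, w in part T true].

(* One part of a triple is a singleton, of level 0, so this is the level of its pair. *)
Definition inner T := level (part T false) + level (part T true).

Definition code T : nat :=
  (((level T).-1 * L + inner T) * 2 + (#|part T true| == 2)) * r + phi (edge T).

Lemma triple_code_bounds T : #|T| = 3 -> [/\ 0 < level T, inner T < level T & phi (edge T) < r].
Proof.
case/(triple_parts key_inj) => b [x [y [z [neq_xy part_b part_nb]]]].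
have pair_lt : level [set x; y] < level T.
  apply: (level_lt_same_bit key_inj (_ : [set x; y] \subset T) (set21 x y) (set22 x y)) => //.
    by rewrite -part_b part_subset.
  by move=> u w; rewrite -part_b => /bit_part -> /bit_part ->.
have cell_neq : cell (level T) x != cell (level T) y.
  by rewrite (@cell_eq _ b) // part_b ?set21 ?set22.
split; first exact: leq_ltn_trans pair_lt.
  by rewrite /inner; case: b part_b part_nb => /= -> ->; rewrite level_set1 ?addn0.
rewrite /edge; case: b part_b part_nb => /= -> ->.
  rewrite imset2_set1l imsetU1 imset_set1; apply: phi_col.
  by rewrite /grid_adj /= xpair_eqE eqxx cell_neq.
rewrite imset2_set1r imsetU1 imset_set1; apply: phi_col.
by rewrite /grid_adj /= xpair_eqE (negbTE cell_neq) eqxx orbT.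
Qed.

Lemma code_lt T : #|T| = 3 -> code T < 2 * L ^ 2 * r.
Proof.
case/triple_code_bounds => lvl_gt0 inner_lt phi_lt; have lvl_le := level_le T key_lt.
have two : (#|part T true| == 2) < 2 by case: (_ == 2).
have : (level T).-1 * L + inner T < L ^ 2.
  rewrite -(prednK lvl_gt0) in inner_lt lvl_le; nia.
rewrite /code; nia.
Qed.

Lemma code_inj T1 T2 : #|T1| = 3 -> #|T2| = 3 -> code T1 = code T2 ->
  [/\ level T1 = level T2, inner T1 = inner T2,
      (#|part T1 true| == 2) = (#|part T2 true| == 2) & phi (edge T1) = phi (edge T2)].
Proof.
move=> /triple_code_bounds [gt1 lt1 phi1] /triple_code_bounds [gt2 lt2 phi2].
have le1 := level_le T1 key_lt; have le2 := level_le T2 key_lt.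
have two1 : (#|part T1 true| == 2) < 2 by case: (_ == 2).
have two2 : (#|part T2 true| == 2) < 2 by case: (_ == 2).
have in1 : inner T1 < L := leq_trans lt1 le1.
have in2 : inner T2 < L := leq_trans lt2 le2.
case/(radix_inj phi1 phi2) => /(radix_inj two1 two2) [/(radix_inj in1 in2) [eq_hi ->] eq_two ->].
by split=> //; [lia | move: eq_two; do 2!case: (_ == 2)].
Qed.

Lemma inner_straddle S b P Q u v : P \subset part S b -> Q \subset part S (~~ b) ->
  u \in P -> v \in Q -> inner (P :|: Q) = level P + level Q.
Proof.
move=> sP sQ hu hv; have [_ part_b part_nb _] := part_straddle sP sQ hu hv.
by rewrite /inner; case: b sP sQ part_b part_nb => _ _ /= -> ->; rewrite // addnC.
Qed.

Lemma edge_straddle S P Q u v : P \subset part S false -> Q \subset part S true ->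
  u \in P -> v \in Q ->
  [/\ #|P :|: Q| = #|P| + #|Q|, #|part (P :|: Q) true| = #|Q|
    & edge (P :|: Q) = [set (cell (level S) x, cell (level S) w) | x in P, w in Q]].
Proof.
move=> sP sQ hu hv; have [lvl part_f part_t card_PQ] := part_straddle sP sQ hu hv.
by rewrite /edge lvl part_f part_t.
Qed.

Lemma ncolors_code_quad22 S : #|part S false| = 2 -> #|part S true| = 2 ->
  3 <= ncolors N code S.
Proof.
case/eqP/cards2P => a1 [a2 [neq_a eA]] /eqP/cards2P [b1 [b2 [neq_b eB]]].
have sA : [set a1; a2] \subset part S false by rewrite eA.
have sB : [set b1; b2] \subset part S true by rewrite eB.
have sA1 : [set a1] \subset part S false by rewrite sub1set eA set21.
have sA2 : [set a2] \subset part S false by rewrite sub1set eA set22.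
have sB1 : [set b1] \subset part S true by rewrite sub1set eB set21.
have sB2 : [set b2] \subset part S true by rewrite sub1set eB set22.
have [cT1 tT1 eT1] := edge_straddle sA sB1 (set21 a1 a2) (set11 b1).
have [cT2 tT2 eT2] := edge_straddle sA sB2 (set21 a1 a2) (set11 b2).
have [cU1 tU1 eU1] := edge_straddle sA1 sB (set11 a1) (set21 b1 b2).
have [cU2 tU2 eU2] := edge_straddle sA2 sB (set11 a2) (set21 b1 b2).
rewrite !cards1 !cards2 ?neq_a ?neq_b in cT1 cT2 cU1 cU2 tT1 tT2 tU1 tU2.
have neq_TU (T U : {set 'I_N}) : #|T| = 3 -> #|U| = 3 -> #|part T true| = 1 -> #|part U true| = 2 ->
    code T != code U.
  by move=> cT cU tT tU; apply/eqP => /(code_inj cT cU) [_ _]; rewrite tT tU.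
have sT1 := union_part_subset sA sB1; have sT2 := union_part_subset sA sB2.
have sU1 := union_part_subset sA1 sB; have sU2 := union_part_subset sA2 sB.
have [eq_T|neq_T] := eqVneq (code ([set a1; a2] :|: [set b1])) (code ([set a1; a2] :|: [set b2]));
  last by apply: (ncolors_ge3 sT1 sT2 sU1) => //; apply: neq_TU.
have [eq_U|neq_U] := eqVneq (code ([set a1] :|: [set b1; b2])) (code ([set a2] :|: [set b1; b2]));
  last by apply: (ncolors_ge3 sT1 sU1 sU2) => //; apply: neq_TU.
have [_ _ _ phi_T] := code_inj cT1 cT2 eq_T; have [_ _ _ phi_U] := code_inj cU1 cU2 eq_U.
rewrite eT1 eT2 eU1 eU2 !imset2_set1r !imset2_set1l !imsetU1 !imset_set1 in phi_T phi_U.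
case: phi_free; apply: (alternating_rect_neq _ _ phi_T phi_U).
  by rewrite (@cell_eq _ false) // eA ?set21 ?set22.
by rewrite (@cell_eq _ true) // eB ?set21 ?set22.
Qed.

Lemma ncolors_code_quad31 S b : #|part S b| = 3 -> #|part S (~~ b)| = 1 ->
  3 <= ncolors N code S.
Proof.
move=> cY /eqP/cards1P [z eZ].
have [p [q [w [sPQ sPW neq_pq neq_pw lt_lvl]]]] := triple_pair_levels key_inj cY.
have sZ : [set z] \subset part S (~~ b) by rewrite eZ.
have [lvl1 _ _ card1] := part_straddle sPQ sZ (set21 p q) (set11 z).
have [lvl2 _ _ card2] := part_straddle sPW sZ (set21 p w) (set11 z).
have in1 := inner_straddle sPQ sZ (set21 p q) (set11 z).
have in2 := inner_straddle sPW sZ (set21 p w) (set11 z).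
rewrite !cards1 !cards2 neq_pq neq_pw level_set1 !addn0 in card1 card2 in1 in2.
have lt_Y : level (part S b) < level S.
  apply: (level_lt_same_bit key_inj (part_subset _ _ b) (_ : p \in _) (_ : q \in _) neq_pq);
    try by apply/(subsetP sPQ); rewrite !inE eqxx ?orbT.
  by move=> x y /bit_part -> /bit_part ->.
apply: (ncolors_ge3 (union_part_subset sPQ sZ) (union_part_subset sPW sZ)
  (part_subset key S b)) => //.
- by apply/eqP => /(code_inj card1 card2) [_ eq_in _ _]; move: lt_lvl; rewrite -in1 -in2 eq_in ltnn.
- by apply/eqP => /(code_inj card1 cY) [eq_lvl _ _ _]; move: lt_Y; rewrite -eq_lvl lvl1 ltnn.
- by apply/eqP => /(code_inj card2 cY) [eq_lvl _ _ _]; move: lt_Y; rewrite -eq_lvl lvl2 ltnn.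
Qed.

Lemma ncolors_code S : #|S| = 4 -> 3 <= ncolors N code S.
Proof.
case/(quad_parts key_inj) => [[c2 c2']|[b [c3 c1]]].
  exact: ncolors_code_quad22.
exact: ncolors_code_quad31 c3 c1.
Qed.

End TripleColoringOfGrid.

Section SplitKey.
Variables (n L : nat).
Hypothesis n_le : n <= 2 ^ L.

Definition split_key (u : 'I_(2 * n)) : nat := if u < n then val u else 2 ^ L + (u - n).

Lemma split_key_inj : injective split_key.
Proof.
move=> u v; rewrite /split_key => eq_key; apply: val_inj => /=.
have := ltn_ord u; have := ltn_ord v.
by case: (ltnP u n) eq_key => hu; case: (ltnP v n) => hv /= eq_key ? ?; lia.
Qed.

Lemma split_key_lt u : split_key u < 2 ^ L.+1.
Proof. by rewrite /split_key expnS; have := ltn_ord u; case: (ltnP u n) => /= ? ?; lia. Qed.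

Lemma split_key_mod u : split_key u %% 2 ^ L < n.
Proof.
have := ltn_ord u; rewrite /split_key; case: (ltnP u n) => /= hu lt_u.
  by rewrite modn_small //; lia.
by rewrite addnC modnDr modn_small; lia.
Qed.

End SplitKey.

Lemma f3_ok_of_g_ok n L r : 0 < n -> n <= 2 ^ L -> g_ok n r -> f3_ok (2 * n) (2 * L ^ 2 * r).
Proof.
move=> n_gt0 n_le [phi [phi_col phi_free]].
have key_inj := split_key_inj n_le; have key_lt := split_key_lt n_le.
have key_mod := split_key_mod n_le.
exists (code L r (split_key L) phi n_gt0); split => [T|S].
  exact: (code_lt n_gt0 key_inj key_lt key_mod phi_col).
exact: (ncolors_code n_gt0 key_inj key_lt key_mod phi_col phi_free).
Qed.

Lemma g_spec n : g_ok n (g n).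
Proof. by rewrite /g; case: ex_minnP => m /pboolP. Qed.

Lemma g_min n r : g_ok n r -> g n <= r.
Proof. by move=> ok; rewrite /g; case: ex_minnP => m _; apply; apply/pboolP. Qed.

Lemma f3_spec N : f3_ok N (f3 N).
Proof. by rewrite /f3; case: ex_minnP => m /pboolP. Qed.

Lemma f3_min N r : f3_ok N r -> f3 N <= r.
Proof. by move=> ok; rewrite /f3; case: ex_minnP => m _; apply; apply/pboolP. Qed.

Theorem proposition4p1 (n : nat) (hn : 0 < n) :
  g n <= f3 (2 * n) /\ f3 (2 * n) <= 2 * (up_log 2 n) ^ 2 * g n.
Proof.
split; first exact/g_min/g_ok_of_f3_ok/f3_spec.
by apply: f3_min; apply: (f3_ok_of_g_ok hn (@up_logP 2 n isT)); apply: g_spec.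
Qed.
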